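(* There is a function $C_2(t,\epsilon)$ such that the following holds for every positive integer $t$ and every $\epsilon\in(0,1)$: let $G$ be a bipartite graph with $\delta(G)\geq C_2(t,\epsilon)$ which is induced $S_{t,t}$-free. Then for every edge $ab$ of $G$ we have $|S_{N(a)}^{N(b)}(\epsilon)|\leq C_2(t,\epsilon)$.
   Context: For positive integers $a,b$, the biclaw $S_{a,b}$ is the graph with vertex set $\{x,x_1,\dots,x_a,y,y_1,\dots,y_b\}$ and edges $xy$, $xy_1,\dots,xy_b$, $yx_1,\dots,yx_a$. Induced $S_{t,t}$-free means no induced subgraph isomorphic to $S_{t,t}$. $N(v)$ is the neighbourhood of $v$, $\delta(G)$ the minimum degree. For vertex sets $X,Y$ and $\epsilon\in(0,1)$, $S_X^Y(\epsilon)=\{x\in X : |N(x)\cap Y|\leq (1-\epsilon)|Y|\}$. *)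

From HB Require Import structures.
From mathcomp Require Import all_boot all_order all_algebra.
From mathcomp Require Import reals.
Set Implicit Arguments. Unset Strict Implicit. Unset Printing Implicit Defensive.
Import Order.TTheory GRing.Theory Num.Theory.
Local Open Scope ring_scope.

(* A finite simple graph: vertex type T : finType, adjacency e : rel T,
   assumed symmetric and irreflexive (hypotheses in the theorem). *)

Definition nbhd (T : finType) (e : rel T) (v : T) : {set T} := [set w | e v w].

Definition bipartite (T : finType) (e : rel T) : Prop :=
  exists c : T -> bool, forall u v, e u v -> c u != c v.

(* Vertices of the biclaw S_{a,b}:
   inl true = x, inl false = y, inr (inl i) = x_i, inr (inr j) = y_j. *)
Definition biclaw_vert (a b : nat) : finType := (bool + ('I_a + 'I_b))%type.

Definition biclaw_adj (a b : nat) : rel (biclaw_vert a b) :=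
  fun u v =>
    match u, v with
    | inl true, inl false | inl false, inl true => true
    | inl true, inr (inr _) | inr (inr _), inl true => true
    | inl false, inr (inl _) | inr (inl _), inl false => true
    | _, _ => false
    end.

Arguments biclaw_adj : clear implicits.

Definition induced_copy (V T : finType) (h : rel V) (e : rel T) : Prop :=
  exists f : V -> T, injective f /\ forall u v, e (f u) (f v) = h u v.

Definition induced_free (V T : finType) (h : rel V) (e : rel T) : Prop :=
  ~ induced_copy h e.

Definition Sset (R : realType) (T : finType) (e : rel T) (X Y : {set T}) (eps : R)
  : {set T} :=
  [set x in X | (#|nbhd e x :&: Y|%:R <= (1 - eps) * #|Y|%:R)%R].

From HB Require Import structures.
From mathcomp Require Import all_boot all_order all_algebra.
From mathcomp Require Import reals ring lra.
Import Order.TTheory GRing.Theory Num.Theory.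
Local Open Scope ring_scope.

(* Every s in S = S_{N(a)}^{N(b)}(eps) is non-adjacent to at least eps |N(b)|
   vertices of N(b).  Choose t vertices of N(b) greedily, each time the one
   missed by most of the surviving vertices of S: since t <= eps |N(b)| / 2, a
   fraction at least eps/2 survives every step, so the t chosen vertices D are
   all missed by a set S' of at least |S| (eps/2)^t > t vertices of S.  As G is
   bipartite, the edge ba with leaves D at b and S' at a is then an induced
   S_{t,t}. *)

Lemma card_set_in_sum (U : finType) (A : {set U}) (P : pred U) :
  #|[set x in A | P x]| = (\sum_(x in A) P x)%N.
Proof.
by rewrite -sum1dep_card big_mkcondr; apply: eq_bigr => x _; case: (P x).
Qed.

Section GreedyCommonMiss.

Variables (R : realFieldType) (I U : finType) (M : I -> {set U}) (Y : {set U}).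
Hypothesis MY : forall i, M i \subset Y.

Let hits (S : {set I}) (y : U) := [set i in S | y \in M i].

Lemma sum_card_setD_hits (S : {set I}) (D : {set U}) :
  (\sum_(i in S) #|M i :\: D| = \sum_(y in Y :\: D) #|hits S y|)%N.
Proof.
have cardMD i : #|M i :\: D| = (\sum_(y in Y :\: D) (y \in M i))%N.
  rewrite -card_set_in_sum; apply: eq_card => y; rewrite !inE.
  case yM: (y \in M i); rewrite ?andbF //.
  by rewrite (subsetP (MY i) y yM) !andbT.
under eq_bigr => i _ do rewrite cardMD.
by rewrite exchange_big; apply: eq_bigr => y _; rewrite card_set_in_sum.
Qed.

Lemma exists_popular_point (S : {set I}) (D : {set U}) (rho : R) :
  Y :\: D != set0 ->
  {in S, forall i, rho * #|Y|%:R <= #|M i :\: D|%:R} ->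
  exists2 y, y \in Y :\: D & #|S|%:R * rho <= #|hits S y|%:R.
Proof.
case/set0Pn=> y0 y0YD missS.
have [y yYD ymax] := @arg_maxnP _ y0 (mem (Y :\: D)) (fun y => #|hits S y|) y0YD.
exists y => //.
have Ygt0 : 0 < #|Y|%:R :> R.
  by rewrite ltr0n card_gt0; apply/set0Pn; exists y; case/setDP: yYD.
rewrite -(ler_pM2l Ygt0) [_ * (_ * rho)]mulrC -mulrA.
apply: le_trans (_ : (\sum_(i in S) #|M i :\: D|)%:R <= _).
  rewrite natr_sum -sum1_card natr_sum mulr_suml; apply: ler_sum => i iS.
  by rewrite mul1r; apply: missS.
rewrite -natrM ler_nat sum_card_setD_hits.
apply: leq_trans (_ : \sum_(z in Y :\: D) #|hits S y| <= _)%N.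
  by apply: leq_sum => z zYD; apply: ymax.
by rewrite sum_nat_const leq_mul2r subset_leq_card ?subsetDl ?orbT.
Qed.

Lemma greedy_common_miss (S : {set I}) (rho : R) (k : nat) :
  0 <= rho -> (k <= #|Y|)%N ->
  {in S, forall i, rho * #|Y|%:R + k%:R <= #|M i|%:R} ->
  exists D S' : {set _},
    [/\ D \subset Y, #|D| = k, S' \subset S,
        {in S', forall i, D \subset M i} & #|S|%:R * rho ^+ k <= #|S'|%:R].
Proof.
move=> rho_ge0; elim: k => [|k IH] kY largeM.
  exists set0, S; split; rewrite ?cards0 ?sub0set ?subxx ?expr0 ?mulr1 //.
  by move=> i _; apply: sub0set.
have [|D [S' [DY cardD S'S DM denseS']]] := IH (ltnW kY).
  move=> i iS; apply: le_trans (largeM i iS).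
  by rewrite lerD2l ler_nat.
have YDn0 : Y :\: D != set0.
  by rewrite -card_gt0 cardsD (setIidPr DY) cardD subn_gt0.
have missS' : {in S', forall i, rho * #|Y|%:R <= #|M i :\: D|%:R}.
  move=> i iS'; rewrite cardsD (setIidPr (DM i iS')) cardD.
  have := largeM i (subsetP S'S i iS').
  rewrite natrB ?natrS; first lra.
  by rewrite -cardD subset_leq_card ?DM.
have [y /setDP[yY yD] denseY] := exists_popular_point S' D rho YDn0 missS'.
exists (y |: D), (hits S' y); split.
- by rewrite subUset sub1set yY.
- by rewrite cardsU1 yD cardD.
- by apply: subset_trans S'S; apply/subsetP => i; rewrite inE => /andP[].
- by move=> i; rewrite inE => /andP[iS' yM]; rewrite subUset sub1set yM DM.
rewrite exprSr mulrA; apply: le_trans denseY.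
by rewrite ler_wpM2r.
Qed.
End GreedyCommonMiss.

Lemma biclaw_embedding_inj (t : nat) (T : finType) (e : rel T)
    (f : biclaw_vert t t -> T) :
  (0 < t)%N -> (forall u v, e (f u) (f v) = biclaw_adj t t u v) ->
  injective (fun i => f (inr (inl i))) -> injective (fun j => f (inr (inr j))) ->
  injective f.
Proof.
move=> t_gt0 f_adj injx injy u v fuv.
(* f u = f v makes u and v twins in S_{t,t}; only two leaves of one centre are. *)
have twins w : biclaw_adj t t u w = biclaw_adj t t v w by rewrite -!f_adj fuv.
have := twins (inl true); have := twins (inl false).
have := twins (inr (inl (Ordinal t_gt0))); have := twins (inr (inr (Ordinal t_gt0))).
by case: u v fuv {twins} => [[]|[i|j]] [[]|[i'|j']] //=; [move/injx-> | move/injy->].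
Qed.

Lemma induced_biclaw_of_anticomplete (t : nat) (T : finType) (e : rel T)
    (a b : T) (A B : {set T}) :
  symmetric e -> bipartite e -> e a b -> (0 < t)%N ->
  (t <= #|A|)%N -> (t <= #|B|)%N ->
  A \subset nbhd e a -> B \subset nbhd e b -> {in A & B, forall x y, ~~ e x y} ->
  induced_copy (biclaw_adj t t) e.
Proof.
move=> e_sym [c c_prop] eab t_gt0 tA tB Aa Bb AB_anti.
pose xs (i : 'I_t) := enum_val (widen_ord tA i).
pose ys (j : 'I_t) := enum_val (widen_ord tB j).
have xsA i : xs i \in A by apply: enum_valP.
have ysB j : ys j \in B by apply: enum_valP.
pose f (v : biclaw_vert t t) :=
  match v with
  | inl true => b | inl false => a | inr (inl i) => xs i | inr (inr j) => ys j
  end.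
have colour_nbr u v : e u v -> c v = ~~ c u by move/c_prop; case: (c u); case: (c v).
have same_colour u v : c u = c v -> e u v = false.
  by move=> cuv; apply/negP => /c_prop; rewrite cuv eqxx.
have eaxs i : e a (xs i) by have := subsetP Aa _ (xsA i); rewrite inE.
have ebys j : e b (ys j) by have := subsetP Bb _ (ysB j); rewrite inE.
have exsys i j : e (xs i) (ys j) = false by apply/negbTE/AB_anti.
have eba : e b a by rewrite e_sym.
have exsa i : e (xs i) a by rewrite e_sym.
have eysb j : e (ys j) b by rewrite e_sym.
have eysxs i j : e (ys j) (xs i) = false by rewrite e_sym.
have cxs i : c (xs i) = c b by rewrite (colour_nbr _ _ (eaxs i)) (colour_nbr _ _ eab).
have cys j : c (ys j) = c a.
  by rewrite (colour_nbr _ _ (ebys j)) (colour_nbr _ _ eab) negbK.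
have f_adj u v : e (f u) (f v) = biclaw_adj t t u v.
  case: u v => [[]|[i|j]] [[]|[i'|j']] /=;
    rewrite ?eab ?eba ?eaxs ?exsa ?ebys ?eysb ?exsys ?eysxs //;
    apply: same_colour;
    by rewrite ?cxs ?cys.
exists f; split=> //; apply: biclaw_embedding_inj => // i j /enum_val_inj/(congr1 val) /= ij;
  exact: val_inj.
Qed.

Lemma Sset_card_nonnbhd (R : realType) (T : finType) (e : rel T)
    (X Y : {set T}) (eps : R) (s : T) :
  s \in Sset e X Y eps -> eps * #|Y|%:R <= #|Y :\: nbhd e s|%:R.
Proof.
rewrite inE => /andP[_ few_nbrs].
have : #|Y :&: nbhd e s|%:R + #|Y :\: nbhd e s|%:R = #|Y|%:R :> R.
  by rewrite -natrD cardsID.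
by move: few_nbrs; rewrite setIC; lra.
Qed.

Section BiclawBound.

Variables (R : realFieldType) (t : nat) (eps : R).
Hypothesis eps_gt0 : 0 < eps.

Definition biclaw_bound : R := t%:R * (2 / eps) ^+ t + 2 * t%:R / eps.

Lemma biclaw_bound_le_half (d : R) : biclaw_bound <= d -> t%:R <= eps / 2 * d.
Proof.
have pow_ge0 : 0 <= t%:R * (2 / eps) ^+ t.
  by rewrite mulr_ge0 ?exprn_ge0 ?divr_ge0 ?(ltW eps_gt0).
move=> bound_le; have : 2 * t%:R / eps <= d by rewrite /biclaw_bound in bound_le; lra.
by rewrite ler_pdivrMr //; lra.
Qed.

Lemma biclaw_bound_lt_geom (s : R) : biclaw_bound < s -> t%:R < s * (eps / 2) ^+ t.
Proof.
have -> : t%:R = t%:R * (2 / eps) ^+ t * (eps / 2) ^+ t.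
  rewrite -mulrA -exprMn (_ : 2 / eps * (eps / 2) = 1) ?expr1n ?mulr1 //.
  by field; apply: lt0r_neq0.
rewrite ltr_pM2r ?exprn_gt0 ?divr_gt0 // /biclaw_bound => bound_lt.
have : 0 <= 2 * t%:R / eps by rewrite divr_ge0 ?mulr_ge0 ?(ltW eps_gt0).
lra.
Qed.

End BiclawBound.

Theorem mainTheorem5 (R : realType) :
  exists C2 : nat -> R -> R,
  forall (t : nat) (eps : R), (0 < t)%N -> 0 < eps < 1 ->
  forall (T : finType) (e : rel T),
    symmetric e -> irreflexive e ->
    bipartite e ->
    (forall v : T, C2 t eps <= #|nbhd e v|%:R) ->
    induced_free (biclaw_adj t t) e ->
    forall a b : T, e a b ->
      #|Sset e (nbhd e a) (nbhd e b) eps|%:R <= C2 t eps.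
Proof.
exists (@biclaw_bound R).
move=> t eps t_gt0 /andP[eps_gt0 eps_lt1] T e e_sym _ e_bip min_deg e_free a b eab.
set Y := nbhd e b; set S := Sset e _ Y eps.
rewrite leNgt; apply/negP => /(biclaw_bound_lt_geom _ _ _ eps_gt0) S_large.
have t_le_epsY := biclaw_bound_le_half _ _ _ eps_gt0 _ (min_deg b).
have t_le_Y : (t <= #|Y|)%N.
  by rewrite -(ler_nat R); move: t_le_epsY (ler0n R #|Y|); nra.
have many_nonnbrs : {in S, forall s, eps / 2 * #|Y|%:R + t%:R <= #|Y :\: nbhd e s|%:R}.
  by move=> s /Sset_card_nonnbhd; lra.
have [|D [S' [DY cardD S'S DS' S'_dense]]] :=
  @greedy_common_miss R T T (fun s => Y :\: nbhd e s) Y (fun s => subsetDl _ _)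
    S (eps / 2) t _ t_le_Y many_nonnbrs.
  by rewrite divr_ge0 ?ltW.
apply: e_free; apply: (@induced_biclaw_of_anticomplete t T e a b S' D) => //.
- by rewrite -(ler_nat R) ltW // (lt_le_trans S_large).
- by rewrite cardD.
- by apply: subset_trans S'S _; apply/subsetP => s; rewrite inE => /andP[].
- by move=> x y xS' /(subsetP (DS' x xS')) /setDP[_]; rewrite inE.
Qed.
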